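(* For $n\ge 0$, $$(\mathfrak C_0+\mathfrak C_0)^n=(2n)!\sum_{l=0}^{n}\frac{(-1)^{n-l}(2n-2l-3)!!\,(2l-1)}{2^{n-l}(n-l)!\,(2l)!}\mathfrak C_{2l}.$$
   Context: The numbers $\mathfrak C_{2n}$ (Cauchy numbers with level $2$) are defined by $\frac{t}{{\rm arcsinh}\,t}=\sum_{n=0}^\infty\mathfrak C_{2n}\frac{t^{2n}}{(2n)!}$ (equivalently $\mathfrak C_{2n}=\mathfrak C_{2n}^{(1)}$, where ${\rm Lif}_{2,1}({\rm arcsinh}\,t)=\sum_n\mathfrak C_n^{(1)}t^n/n!$ with ${\rm Lif}_{2,1}(z)=\sum_{m\ge0}\frac{z^{2m}}{(2m+1)!}$). Convolution notation: $(\mathfrak C_{2j_1}+\cdots+\mathfrak C_{2j_k})^n:=\sum_{i_1+\cdots+i_k=n,\ i_1,\dots,i_k\ge0}\frac{(2n)!}{(2i_1)!\cdots(2i_k)!}\mathfrak C_{2i_1+2j_1}\cdots\mathfrak C_{2i_k+2j_k}$. Double factorials: $(2i-1)!!=(2i-1)(2i-3)\cdots1$ for $i\ge1$, $(-1)!!=1$, and $(-(2i+1))!!=\frac{(-1)^i}{(2i-1)!!}$ for $i\ge1$. *)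

From Stdlib Require Import Reals ZArith Lia.
From Coquelicot Require Import Coquelicot.
Open Scope R_scope.

Definition asinh (t : R) : R := ln (t + sqrt (t ^ 2 + 1)).

Fixpoint dfact (k : nat) : nat :=
  match k with
  | O => 1%nat
  | S O => 1%nat
  | S (S m as p) => (k * dfact m)%nat
  end.

(* Double factorial of an odd integer z, as a real number:
   z!! = dfact z for z >= 1, (-1)!! = 1, and
   (-(2i+1))!! = (-1)^i / (2i-1)!! for i >= 1. (Only used at odd z.) *)
Definition odd_dfact (z : Z) : R :=
  if Z.leb 0 z then INR (dfact (Z.to_nat z))
  else
    let i := Z.to_nat ((- z - 1) / 2) in
    if Nat.eqb i 0 then 1 else (-1) ^ i / INR (dfact (2 * i - 1)).

(* (C_0 + C_0)^n := sum_{i1+i2=n} (2n)!/((2 i1)! (2 i2)!) C_{2 i1} C_{2 i2},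
   where C2 k stands for the Cauchy number with level 2, C_{2k}. *)
Definition conv2 (C2 : nat -> R) (n : nat) : R :=
  sum_f_R0 (fun i => INR (fact (2 * n)%nat) / (INR (fact (2 * i)%nat) * INR (fact (2 * (n - i))%nat))
                     * C2 i * C2 (n - i)%nat) n.

From Stdlib Require Import Reals ZArith Lia Lra.
From Coquelicot Require Import Coquelicot.
Open Scope R_scope.

(** With c_k = C_{2k} / (2k)!, the hypothesis says f(x) = sqrt x / asinh (sqrt x) = sum_k c_k x^k
    for small x > 0.  In the variable t = sqrt x one has (t / f)' = asinh' t = 1 / sqrt (1 + t^2),
    which becomes f^2 = sqrt (1 + x) (f - 2 x f').  The right side is the product of
    sum_m binom(1/2, m) x^m and sum_k (1 - 2k) c_k x^k, so comparing the coefficients of x^n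
    (power series agreeing on an interval (0, rho) have the same coefficients) gives the formula. *)

Lemma CV_radius_ge_of_ex_pseries (a : nat -> R) (y : R) :
  ex_pseries a y -> Rbar_le (Rabs y) (CV_radius a).
Proof.
  intro Hy.
  apply ex_pseries_R, ex_series_lim_0 in Hy.
  destruct (filterlim_bounded (fun n => a n * y ^ n)) as [M HM].
  { exists 0. exact Hy. }
  apply (proj1 (CV_radius_bounded a)). exists M. intro n.
  rewrite Rabs_mult, RPow_abs, Rabs_Rabsolu, <- Rabs_mult. exact (HM n).
Qed.

Lemma CV_radius_ge_of_ex_pseries_interval (a : nat -> R) (rho : Rbar) :
  (forall y, 0 < y -> Rbar_lt y rho -> ex_pseries a y) -> Rbar_le rho (CV_radius a).
Proof.
  intro Ha.
  assert (Hr0 := CV_radius_ge_0 a).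
  destruct (CV_radius a) as [r | |] eqn:Hr; simpl in Hr0; [| now destruct rho | contradiction].
  assert (Hgt : forall y, 0 < y -> Rbar_lt y rho -> y <= r).
  { intros y Hy Hyrho. assert (Hle := CV_radius_ge_of_ex_pseries a y (Ha y Hy Hyrho)).
    rewrite Hr, Rabs_pos_eq in Hle by lra. exact Hle. }
  destruct rho as [rho | |]; simpl in *; [| | exact I].
  - apply Rnot_lt_le. intro Hlt.
    assert (H := Hgt ((r + rho) / 2) ltac:(lra) ltac:(lra)). lra.
  - assert (H := Hgt (r + 1) ltac:(lra) I). lra.
Qed.

Lemma Rabs_lt_CV_radius (a : nat -> R) (rho x : R) :
  Rbar_le rho (CV_radius a) -> 0 <= x < rho -> Rbar_lt (Rabs x) (CV_radius a).
Proof.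
  intros Hrad Hx. apply (Rbar_lt_le_trans _ rho); [| exact Hrad].
  rewrite Rabs_pos_eq; simpl; lra.
Qed.

Lemma PSeries_coef0_of_eq0_right (a : nat -> R) (rho : R) :
  0 < rho -> Rbar_le rho (CV_radius a) ->
  (forall x, 0 < x < rho -> PSeries a x = 0) -> a O = 0.
Proof.
  intros Hrho Hrad H0.
  rewrite <- PSeries_0.
  apply (filterlim_locally_unique (F := at_right 0) (PSeries a)).
  - apply (filterlim_filter_le_1 (F := locally 0)).
    + intros P HP. unfold at_right, within. apply (filter_imp P); auto.
    + apply continuity_pt_filterlim, PSeries_continuity.
      apply (Rabs_lt_CV_radius a rho); [exact Hrad | lra].
  - apply (filterlim_ext_loc (fun _ => 0)).
    + apply (locally_interval _ 0 (- rho) rho); simpl; try lra.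
      intros y _ Hy Hpos. symmetry. apply H0. lra.
    + apply filterlim_const.
Qed.

Lemma PSeries_coef_eq0_of_eq0_right (a : nat -> R) (rho : R) :
  0 < rho -> Rbar_le rho (CV_radius a) ->
  (forall x, 0 < x < rho -> PSeries a x = 0) -> forall n, a n = 0.
Proof.
  intros Hrho Hrad H0 n. revert a Hrad H0.
  induction n as [| n IH]; intros a Hrad H0.
  - exact (PSeries_coef0_of_eq0_right a rho Hrho Hrad H0).
  - change (a (S n)) with (PS_decr_1 a n).
    apply IH; [rewrite CV_radius_decr_1; exact Hrad |].
    intros x Hx.
    assert (Hx_rad := Rabs_lt_CV_radius a rho x Hrad ltac:(lra)).
    assert (E := PSeries_decr_1 a x (CV_radius_inside a x Hx_rad)).
    rewrite H0, (PSeries_coef0_of_eq0_right a rho Hrho Hrad H0) in E by exact Hx.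
    apply (Rmult_eq_reg_l x); lra.
Qed.

Lemma PSeries_coef_unique_right (a b : nat -> R) (rho : R) :
  0 < rho -> Rbar_le rho (CV_radius a) -> Rbar_le rho (CV_radius b) ->
  (forall x, 0 < x < rho -> PSeries a x = PSeries b x) -> forall n, a n = b n.
Proof.
  intros Hrho Ha Hb Hab n.
  assert (Hex : forall c x, Rbar_le rho (CV_radius c) -> 0 < x < rho -> ex_pseries c x).
  { intros c x Hc Hx. apply CV_radius_inside, (Rabs_lt_CV_radius c rho); [exact Hc | lra]. }
  apply Rminus_diag_uniq.
  apply (PSeries_coef_eq0_of_eq0_right (PS_minus a b) rho Hrho).
  - apply CV_radius_ge_of_ex_pseries_interval.
    intros x Hx0 Hx1. apply ex_pseries_minus; auto.
  - intros x Hx. rewrite PSeries_minus, Hab by auto. ring.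
Qed.

Definition PS_affine_euler (al be : R) (a : nat -> R) (k : nat) : R :=
  (al + be * INR k) * a k.

Lemma PS_affine_euler_decomp (al be : R) (a : nat -> R) (k : nat) :
  PS_affine_euler al be a k = PS_plus (PS_scal al a) (PS_scal be (PS_incr_1 (PS_derive a))) k.
Proof.
  unfold PS_affine_euler, PS_plus, PS_scal, PS_derive.
  destruct k as [| k]; simpl;
    unfold plus, scal, zero; simpl; unfold mult; simpl; ring.
Qed.

Section AffineEuler.
Variables (al be : R) (a : nat -> R) (x : R).
Hypothesis Hx : Rbar_lt (Rabs x) (CV_radius a).

Lemma ex_pseries_affine_euler : ex_pseries (PS_affine_euler al be a) x.
Proof.
  apply (ex_pseries_ext _ _ _ (fun k => eq_sym (PS_affine_euler_decomp al be a k))).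
  apply ex_pseries_plus; apply ex_pseries_scal; try (apply Rmult_comm).
  - apply CV_radius_inside, Hx.
  - apply ex_pseries_incr_1, ex_pseries_derive, Hx.
Qed.

Lemma PSeries_affine_euler :
  PSeries (PS_affine_euler al be a) x = al * PSeries a x + be * (x * PSeries (PS_derive a) x).
Proof.
  rewrite (PSeries_ext _ _ _ (PS_affine_euler_decomp al be a)).
  rewrite PSeries_plus, !PSeries_scal, PSeries_incr_1; [reflexivity |
    apply ex_pseries_scal; [apply Rmult_comm | ] ..].
  - apply CV_radius_inside, Hx.
  - apply ex_pseries_incr_1, ex_pseries_derive, Hx.
Qed.

End AffineEuler.

Lemma CV_radius_affine_euler (al be : R) (a : nat -> R) :
  Rbar_le (CV_radius a) (CV_radius (PS_affine_euler al be a)).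
Proof.
  apply CV_radius_ge_of_ex_pseries_interval. intros y Hy0 Hy.
  apply ex_pseries_affine_euler. rewrite Rabs_pos_eq by lra. exact Hy.
Qed.

Lemma dfact_pos (k : nat) : (0 < dfact k)%nat.
Proof.
  enough (H : (0 < dfact k)%nat /\ (0 < dfact (S k))%nat) by apply H.
  induction k as [| k [IH1 IH2]]; [simpl; lia |].
  split; [exact IH2 |]. change (dfact (S (S k))) with (S (S k) * dfact k)%nat. lia.
Qed.

Lemma odd_dfact_of_nat (k : nat) : odd_dfact (Z.of_nat k) = INR (dfact k).
Proof.
  unfold odd_dfact.
  replace (Z.leb 0 (Z.of_nat k)) with true by (symmetry; apply Z.leb_le; lia).
  rewrite Nat2Z.id. reflexivity.
Qed.

(* binom(1/2, m) *)
Definition sqrt1p_coef (m : nat) : R :=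
  - (-1) ^ m * odd_dfact (2 * Z.of_nat m - 3) / (2 ^ m * INR (fact m)).

Lemma sqrt1p_coef_0 : sqrt1p_coef 0 = 1.
Proof. unfold sqrt1p_coef, odd_dfact. simpl. field. Qed.

Lemma sqrt1p_coef_S (m : nat) :
  sqrt1p_coef (S m) = (1 - 2 * INR m) / (2 * INR (S m)) * sqrt1p_coef m.
Proof.
  destruct m as [| [| k]]; [unfold sqrt1p_coef, odd_dfact; simpl; field .. |].
  unfold sqrt1p_coef.
  replace (2 * Z.of_nat (S (S (S k))) - 3)%Z with (Z.of_nat (S (S (2 * k + 1)))) by lia.
  replace (2 * Z.of_nat (S (S k)) - 3)%Z with (Z.of_nat (2 * k + 1)) by lia.
  rewrite !odd_dfact_of_nat.
  change (dfact (S (S (2 * k + 1)))) with (S (S (2 * k + 1)) * dfact (2 * k + 1))%nat.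
  change (fact (S (S (S k)))) with (S (S (S k)) * fact (S (S k)))%nat.
  assert (Hd : INR (dfact (2 * k + 1)) <> 0) by (apply not_0_INR; pose proof (dfact_pos (2 * k + 1)); lia).
  assert (Hf := INR_fact_neq_0 (S (S k))).
  assert (Hk := pos_INR k).
  rewrite !mult_INR, !S_INR, plus_INR, mult_INR. simpl pow. simpl (INR 2). simpl (INR 1).
  field. repeat split; try lra. apply pow_nonzero. lra.
Qed.

Lemma Rabs_sqrt1p_coef_le_1 (m : nat) : Rabs (sqrt1p_coef m) <= 1.
Proof.
  induction m as [| m IH]; [rewrite sqrt1p_coef_0, Rabs_R1; lra |].
  rewrite sqrt1p_coef_S, Rabs_mult.
  assert (Hratio : Rabs ((1 - 2 * INR m) / (2 * INR (S m))) <= 1).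
  { rewrite S_INR. assert (Hm := pos_INR m).
    unfold Rdiv. rewrite Rabs_mult, Rabs_inv, (Rabs_pos_eq (2 * _)) by lra.
    apply (Rmult_le_reg_r (2 * (INR m + 1))); [lra |].
    rewrite Rmult_assoc, Rinv_l, Rmult_1_r, Rmult_1_l by lra.
    apply Rabs_le. lra. }
  pose proof (Rabs_pos (sqrt1p_coef m)). pose proof (Rabs_pos ((1 - 2 * INR m) / (2 * INR (S m)))).
  nra.
Qed.

Lemma CV_radius_sqrt1p_coef : Rbar_le 1 (CV_radius sqrt1p_coef).
Proof.
  apply (proj1 (CV_radius_bounded sqrt1p_coef)). exists 1. intro n.
  rewrite pow1, Rmult_1_r. apply Rabs_sqrt1p_coef_le_1.
Qed.

Lemma PS_derive_sqrt1p_coef (k : nat) :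
  2 * PS_derive sqrt1p_coef k = PS_affine_euler 1 (-2) sqrt1p_coef k.
Proof.
  unfold PS_derive, PS_affine_euler. rewrite sqrt1p_coef_S.
  field. rewrite S_INR. pose proof (pos_INR k). lra.
Qed.

Lemma sqrt1p_coef_ode (y : R) : Rabs y < 1 ->
  2 * (1 + y) * PSeries (PS_derive sqrt1p_coef) y = PSeries sqrt1p_coef y.
Proof.
  intro Hy.
  assert (Hrad := Rbar_lt_le_trans (Rabs y) 1 _ Hy CV_radius_sqrt1p_coef).
  enough (H : 2 * PSeries (PS_derive sqrt1p_coef) y
              = 1 * PSeries sqrt1p_coef y + -2 * (y * PSeries (PS_derive sqrt1p_coef) y)) by lra.
  rewrite <- PSeries_affine_euler, <- PSeries_scal by exact Hrad.
  apply PSeries_ext, PS_derive_sqrt1p_coef.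
Qed.

Lemma is_derive_sqrt1p_coef_ratio (y : R) : Rabs y < 1 ->
  is_derive (fun t => PSeries sqrt1p_coef t / sqrt (1 + t)) y 0.
Proof.
  intro Hy.
  assert (Hrad := Rbar_lt_le_trans (Rabs y) 1 _ Hy CV_radius_sqrt1p_coef).
  assert (Hode := sqrt1p_coef_ode y Hy).
  apply Rabs_lt_between in Hy.
  set (s := sqrt (1 + y)).
  assert (Hs : 0 < s) by (apply sqrt_lt_R0; lra).
  assert (Hs2 : s * s = 1 + y) by (apply sqrt_sqrt; lra).
  assert (Hsqrt : is_derive (fun t => sqrt (1 + t)) y (/ (2 * s))) by (auto_derive; [lra | unfold s; ring]).
  replace 0 with ((PSeries (PS_derive sqrt1p_coef) y * s - PSeries sqrt1p_coef y * / (2 * s)) / s ^ 2).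
  - apply is_derive_div; [apply is_derive_PSeries, Hrad | exact Hsqrt | exact (Rgt_not_eq _ _ Hs)].
  - rewrite <- Hode, <- Hs2. field. lra.
Qed.

Lemma PSeries_sqrt1p_coef (x : R) : 0 <= x < 1 -> PSeries sqrt1p_coef x = sqrt (1 + x).
Proof.
  intro Hx.
  set (ratio := fun t => PSeries sqrt1p_coef t / sqrt (1 + t)).
  assert (Hderiv : forall c, Rabs (c - 0) <= x -> is_derive ratio c 0).
  { intros c Hc. apply is_derive_sqrt1p_coef_ratio. rewrite Rminus_0_r in Hc. lra. }
  destruct (MVT_cor4 ratio (fun _ => 0) 0 x Hderiv x) as [c [Hc _]].
  { rewrite Rminus_0_r, Rabs_pos_eq; lra. }
  unfold ratio in Hc. rewrite PSeries_0, sqrt1p_coef_0, Rplus_0_r, sqrt_1 in Hc.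
  assert (Hs : 0 < sqrt (1 + x)) by (apply sqrt_lt_R0; lra).
  apply (Rmult_eq_reg_r (/ sqrt (1 + x))); [| apply Rinv_neq_0_compat; lra].
  rewrite Rinv_r by lra. unfold Rdiv in Hc. lra.
Qed.

Definition cauchy2_gf (x : R) : R := sqrt x / asinh (sqrt x).

Lemma cauchy2_gf_ode (x d : R) : 0 < x -> is_derive cauchy2_gf x d ->
  cauchy2_gf x ^ 2 = sqrt (1 + x) * (cauchy2_gf x - 2 * x * d).
Proof.
  intros Hx Hd.
  unfold cauchy2_gf, asinh in *.
  assert (Hss : sqrt x * sqrt x = x) by (apply sqrt_sqrt; lra).
  replace (sqrt x ^ 2 + 1) with (1 + x) by (rewrite pow2_sqrt; lra).
  set (s := sqrt x) in *. set (q := sqrt (1 + x)) in *. set (A := ln (s + q)) in *.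
  assert (Hs : 0 < s) by (apply sqrt_lt_R0; lra).
  assert (Hq : 1 < q) by (rewrite <- sqrt_1; apply sqrt_lt_1; lra).
  assert (HA : 0 < A) by (rewrite <- ln_1; apply ln_increasing; lra).
  assert (Hd_eq : d = / (2 * s * A) - / (2 * q * A ^ 2)).
  { apply is_derive_unique in Hd. rewrite <- Hd. apply is_derive_unique.
    auto_derive; change (sqrt x) with s; rewrite Rmult_1_r, Hss, (Rplus_comm x 1); fold q A.
    - repeat split; lra.
    - field. lra. }
  rewrite Hd_eq, <- Hss. field. lra.
Qed.

Section CauchyConvolution.

Variables (c : nat -> R) (rho : R).
Hypothesis Hrho : 0 < rho <= 1.
Hypothesis Hc : forall x, 0 < x < rho -> is_pseries c x (cauchy2_gf x).

Lemma CV_radius_cauchy2 : Rbar_le rho (CV_radius c).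
Proof.
  apply CV_radius_ge_of_ex_pseries_interval. intros y Hy0 Hy.
  exists (cauchy2_gf y). apply Hc. simpl in Hy. lra.
Qed.

Lemma is_derive_cauchy2_gf (x : R) : 0 < x < rho ->
  is_derive cauchy2_gf x (PSeries (PS_derive c) x).
Proof.
  intro Hx. apply (is_derive_ext_loc (PSeries c)).
  - apply (locally_interval _ x 0 rho); simpl; try lra.
    intros y Hy0 Hy1. apply is_pseries_unique, Hc. simpl in *. lra.
  - apply is_derive_PSeries, (Rabs_lt_CV_radius c rho); [exact CV_radius_cauchy2 | lra].
Qed.

Lemma PSeries_mult_cauchy2 (x : R) : 0 < x < rho ->
  PSeries (PS_mult c c) x = PSeries (PS_mult (PS_affine_euler 1 (-2) c) sqrt1p_coef) x.
Proof.
  intro Hx.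
  assert (Hxc := Rabs_lt_CV_radius c rho x CV_radius_cauchy2 ltac:(lra)).
  assert (Hxs := Rabs_lt_CV_radius sqrt1p_coef 1 x CV_radius_sqrt1p_coef ltac:(lra)).
  assert (Hxe := Rbar_lt_le_trans _ _ _ Hxc (CV_radius_affine_euler 1 (-2) c)).
  rewrite !PSeries_mult by assumption.
  rewrite PSeries_affine_euler, PSeries_sqrt1p_coef, (is_pseries_unique _ _ _ (Hc x Hx)) by (assumption || lra).
  transitivity (cauchy2_gf x ^ 2); [ring |].
  rewrite (cauchy2_gf_ode x _ (proj1 Hx) (is_derive_cauchy2_gf x Hx)). ring.
Qed.

Lemma PS_mult_cauchy2 (n : nat) :
  PS_mult c c n = PS_mult (PS_affine_euler 1 (-2) c) sqrt1p_coef n.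
Proof.
  apply (PSeries_coef_unique_right _ _ rho (proj1 Hrho)); [| | exact PSeries_mult_cauchy2].
  - apply CV_radius_ge_of_ex_pseries_interval. intros y Hy0 Hy. simpl in Hy.
    assert (Hyc := Rabs_lt_CV_radius c rho y CV_radius_cauchy2 ltac:(lra)).
    apply ex_pseries_mult; exact Hyc.
  - apply CV_radius_ge_of_ex_pseries_interval. intros y Hy0 Hy. simpl in Hy.
    assert (Hyc := Rabs_lt_CV_radius c rho y CV_radius_cauchy2 ltac:(lra)).
    apply ex_pseries_mult.
    + exact (Rbar_lt_le_trans _ _ _ Hyc (CV_radius_affine_euler 1 (-2) c)).
    + exact (Rabs_lt_CV_radius sqrt1p_coef 1 y CV_radius_sqrt1p_coef ltac:(lra)).
Qed.

End CauchyConvolution.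

Lemma is_pseries_cauchy2_gf (C2 : nat -> R) (r : R) :
  0 < r ->
  (forall t, 0 < Rabs t < r ->
     is_series (fun k => C2 k * t ^ (2 * k)%nat / INR (fact (2 * k)%nat)) (t / asinh t)) ->
  forall x, 0 < x < r * r ->
  is_pseries (fun k => C2 k / INR (fact (2 * k))) x (cauchy2_gf x).
Proof.
  intros Hr HC x Hx. apply is_pseries_R.
  assert (Hs : 0 < sqrt x) by (apply sqrt_lt_R0; lra).
  assert (Hsr : sqrt x < r) by (rewrite <- (sqrt_square r) by lra; apply sqrt_lt_1; nra).
  assert (Ht : 0 < Rabs (sqrt x) < r) by (rewrite Rabs_pos_eq; lra).
  assert (Hterm : forall k,
    C2 k * sqrt x ^ (2 * k) / INR (fact (2 * k)) = C2 k / INR (fact (2 * k)) * x ^ k).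
  { intro k. rewrite pow_mult, pow2_sqrt by lra. field. apply INR_fact_neq_0. }
  exact (is_series_ext _ _ _ Hterm (HC (sqrt x) Ht)).
Qed.

Lemma conv2_PS_mult (C2 : nat -> R) (n : nat) :
  let c := fun k => C2 k / INR (fact (2 * k)) in
  conv2 C2 n = INR (fact (2 * n)) * PS_mult c c n.
Proof.
  intro c. unfold conv2, PS_mult, c. rewrite scal_sum. apply sum_eq. intros i _.
  field. split; apply INR_fact_neq_0.
Qed.

Theorem theorem2 (C2 : nat -> R)
  (HC : exists r : R, 0 < r /\
        forall t : R, 0 < Rabs t < r ->
          is_series (fun k => C2 k * t ^ (2 * k)%nat / INR (fact (2 * k)%nat)) (t / asinh t))
  (n : nat) :
  conv2 C2 n =
  INR (fact (2 * n)%nat) *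
  sum_f_R0 (fun l =>
     (-1) ^ (n - l)%nat * odd_dfact ((Z.of_nat (2 * n) - Z.of_nat (2 * l) - 3)%Z) * (2 * INR l - 1)
     / (2 ^ (n - l)%nat * INR (fact (n - l)%nat) * INR (fact (2 * l)%nat)) * C2 l) n.
Proof.
  destruct HC as [r [Hr HC]].
  rewrite conv2_PS_mult.
  set (c := fun k => C2 k / INR (fact (2 * k))).
  set (rho := Rmin (r * r) 1).
  assert (Hrho : 0 < rho <= 1) by (split; [apply Rmin_glb_lt; nra | apply Rmin_r]).
  assert (Hc : forall x, 0 < x < rho -> is_pseries c x (cauchy2_gf x)).
  { intros x Hx. apply (is_pseries_cauchy2_gf C2 r Hr HC).
    pose proof (Rmin_l (r * r) 1). unfold rho in Hx. lra. }
  rewrite (PS_mult_cauchy2 c rho Hrho Hc n).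
  unfold PS_mult. apply Rmult_eq_compat_l, sum_eq. intros l Hl.
  unfold PS_affine_euler, c, sqrt1p_coef.
  replace (Z.of_nat (2 * n) - Z.of_nat (2 * l) - 3)%Z with (2 * Z.of_nat (n - l) - 3)%Z by lia.
  field. repeat split; try apply INR_fact_neq_0. apply pow_nonzero. lra.
Qed.
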